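(* Let $N\ge1$ and $\gamma=(\gamma_\ell)_{-N\le\ell\le N}\in\mathbb{C}^{2N+1}$ be fixed, and for $\varepsilon>0$ let $\Box_\varepsilon\in\mathcal O_{N,\varepsilon}$ be the operator with coefficients $c_\ell=\gamma_\ell/\varepsilon$. The following six properties are equivalent (all limits are as $\varepsilon\to0^+$, and ''locally uniformly in $]a,b[$'' means uniformly on $[a+\delta,b-\delta]$ for every $\delta>0$): (a) D.E.L. converges to C.E.L.: for all smooth $P,Q,R:[a,b]\to\mathbb{R}^{d\times d}$ with $P,Q$ symmetric and $R$ skew-symmetric, all smooth $J_1,J_2:[a,b]\to\mathbb{R}^d$, and all $\mathbf x\in\mathcal C^2([a,b],\mathbb{R}^d)$, $\Theta(\mathbf x)\to-P\ddot{\mathbf x}+(-\dot P+2R)\dot{\mathbf x}+(\dot R+Q)\mathbf x-\dot J_1+J_2$ locally uniformly in $]a,b[$; (b) for all $\mathbf x\in\mathcal C^2([a,b],\mathbb{R}^d)$, $\Box_\varepsilon\mathbf x\to\dot{\mathbf x}$ locally uniformly in $]a,b[$; (c) for all $\mathbf x\in\mathcal C^2([a,b],\mathbb{R}^d)$, $\Box_{-\varepsilon}\mathbf x\to-\dot{\mathbf x}$ locally uniformly in $]a,b[$; (d) the functions $t\mapsto\Box_\varepsilon1$ and $t\mapsto\Box_\varepsilon t$ converge respectively to $0$ and $1$ locally uniformly in $]a,b[$; (e) $\Box_\varepsilon\in\tilde{\mathcal O}_{N,\varepsilon}$, i.e. $\sum_{\ell=-N}^N\gamma_\ell=0$ and $\sum_{\ell=-N}^N\ell\gamma_\ell=1$;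 (f) there exist $k_1,\dots,k_{2N-1}\in\mathbb{C}$ such that $\Box_\varepsilon\mathbf x(t)=\Box^{[1,0]}_\varepsilon\mathbf x(t)+\sum_{\ell=-(N-1)}^{N-1}k_{\ell+N}\,\Box^{[1,-1]}_\varepsilon\mathbf x(t-\ell\varepsilon)$ for all $\mathbf x$ and all $t$ in the safety interval $[a+2N\varepsilon,b-2N\varepsilon]$ (equivalently, the coefficient vector $\gamma$ equals that of the forward difference, $\gamma_0=-1,\gamma_1=1$, plus $\sum_{\ell}k_{\ell+N}$ times the vector with entries $1,-2,1$ at indices $-\ell-1,-\ell,-\ell+1$).
   Context: Fix $[a,b]$. For $\varepsilon>0$ and each integer $\ell$, $\chi_\ell$ is the indicator function of $[\max(a,a+\ell\varepsilon),\min(b,b+\ell\varepsilon)]$; a term multiplied by a vanishing characteristic function is $0$. Given coefficients $(c_\ell)_{-N\le\ell\le N}$, $\Box_\varepsilon\mathbf x(t)=\sum_{\ell=-N}^{N}c_\ell\,\mathbf x(t+\ell\varepsilon)\chi_{-\ell}(t)$ (componentwise) and $\Box_{-\varepsilon}\mathbf f(t)=\sum_{\ell=-N}^{N}c_\ell\,\mathbf f(t-\ell\varepsilon)\chi_{\ell}(t)$ (same coefficients). $\mathcal O_{N,\varepsilon}$ is the set of such operators with $c_\ell=\gamma_\ell/\varepsilon$, $\gamma_\ell\in\mathbb{C}$ independent of $\varepsilon$; $\tilde{\mathcal O}_{N,\varepsilon}\subset\mathcal O_{N,\varepsilon}$ consists of those with $\Box_\varepsilon1=0$ and $\Box_\varepsilon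 t=1$ for $t$ in the safety interval $[a+2N\varepsilon,b-2N\varepsilon]$. For $r,s\in\mathbb{C}$, $\Box^{[r,s]}_\varepsilon\mathbf x(t)=-\chi_{1}(t)\frac{s}{\varepsilon}\mathbf x(t-\varepsilon)+\frac{s-r}{\varepsilon}\mathbf x(t)+\chi_{-1}(t)\frac{r}{\varepsilon}\mathbf x(t+\varepsilon)$. For matrix/vector functions $P,Q,R,J_1,J_2$ on $[a,b]$ and $\mathbf x:[a,b]\to\mathbb{R}^d$, \[ \Theta(\mathbf x)(t)=\Box_{-\varepsilon}(P\,\Box_\varepsilon\mathbf x)(t)-\Box_{-\varepsilon}(R\mathbf x)(t)+R(t)\Box_\varepsilon\mathbf x(t)+Q(t)\mathbf x(t)+\Box_{-\varepsilon}J_1(t)+J_2(t), \] the left-hand side of the discrete Euler–Lagrange equation of the quadratic lagrangian $\frac12{}^t\dot{\mathbf x}P\dot{\mathbf x}+\frac12{}^t\mathbf xQ\mathbf x+{}^t\mathbf xR\dot{\mathbf x}+{}^tJ_1\dot{\mathbf x}+{}^tJ_2\mathbf x+J_3$ (${}^t$ denotes transpose). *)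

From Stdlib Require Export Reals ZArith.
Open Scope R_scope.

Record Cplx := mkC { Re : R ; Im : R }.
Definition C0 : Cplx := mkC 0 0.
Definition RtoC (x : R) : Cplx := mkC x 0.
Definition Cadd (z w : Cplx) : Cplx := mkC (Re z + Re w) (Im z + Im w).
Definition Copp (z : Cplx) : Cplx := mkC (- Re z) (- Im z).
Definition Csub (z w : Cplx) : Cplx := Cadd z (Copp w).
Definition Cmul (z w : Cplx) : Cplx :=
  mkC (Re z * Re w - Im z * Im w) (Re z * Im w + Im z * Re w).
Definition Cnorm (z : Cplx) : R := sqrt (Re z ^ 2 + Im z ^ 2).

Fixpoint Csum (n : nat) (f : nat -> Cplx) : Cplx :=
  match n with O => C0 | S m => Cadd (Csum m f) (f m) end.
Fixpoint Rsum (n : nat) (f : nat -> R) : R :=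
  match n with O => 0 | S m => Rsum m f + f m end.
Definition CsumZ (N : nat) (f : Z -> Cplx) : Cplx :=
  Csum (2 * N + 1)%nat (fun k => f (Z.of_nat k - Z.of_nat N)%Z).

Definition chi (a b eps : R) (l : Z) (t : R) : R :=
  if Rle_dec (Rmax a (a + IZR l * eps)) t then
    if Rle_dec t (Rmin b (b + IZR l * eps)) then 1 else 0
  else 0.

Definition boxC (a b : R) (N : nat) (g : Z -> Cplx) (eps : R) (f : R -> Cplx) (t : R) : Cplx :=
  CsumZ N (fun l => Cmul (Cmul (g l) (RtoC (/ eps)))
                         (Cmul (f (t + IZR l * eps)) (RtoC (chi a b eps (- l)%Z t)))).
Definition boxmC (a b : R) (N : nat) (g : Z -> Cplx) (eps : R) (f : R -> Cplx) (t : R) : Cplx :=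
  CsumZ N (fun l => Cmul (Cmul (g l) (RtoC (/ eps)))
                         (Cmul (f (t - IZR l * eps)) (RtoC (chi a b eps l t)))).
Definition boxrs (a b : R) (r s : Cplx) (eps : R) (f : R -> Cplx) (t : R) : Cplx :=
  Cadd (Cadd
    (Copp (Cmul (RtoC (chi a b eps 1 t)) (Cmul (Cmul s (RtoC (/ eps))) (f (t - eps)))))
    (Cmul (Cmul (Csub s r) (RtoC (/ eps))) (f t)))
    (Cmul (RtoC (chi a b eps (-1) t)) (Cmul (Cmul r (RtoC (/ eps))) (f (t + eps)))).

Definition mvC (d : nat) (M : nat -> nat -> R) (v : nat -> Cplx) (i : nat) : Cplx :=
  Csum d (fun j => Cmul (RtoC (M i j)) (v j)).
Definition mvR (d : nat) (M : nat -> nat -> R) (v : nat -> R) (i : nat) : R :=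
  Rsum d (fun j => M i j * v j).

Definition Theta (d : nat) (a b : R) (N : nat) (g : Z -> Cplx) (eps : R)
  (P Q Rm : R -> nat -> nat -> R) (J1 J2 : R -> nat -> R) (x : R -> nat -> R)
  (t : R) (i : nat) : Cplx :=
  let bx := fun s j => boxC a b N g eps (fun u => RtoC (x u j)) s in
  Cadd (Cadd (Cadd (Cadd (Cadd
    (boxmC a b N g eps (fun s => mvC d (P s) (bx s) i) t)
    (Copp (boxmC a b N g eps (fun s => RtoC (mvR d (Rm s) (x s) i)) t)))
    (mvC d (Rm t) (bx t) i))
    (RtoC (mvR d (Q t) (x t) i)))
    (boxmC a b N g eps (fun s => RtoC (J1 s i)) t))
    (RtoC (J2 t i)).

Definition loc_unif_cv (a b : R) (F : R -> R -> Cplx) (G : R -> Cplx) : Prop :=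
  forall delta, 0 < delta -> forall eta, 0 < eta ->
  exists eps0, 0 < eps0 /\
    forall eps t, 0 < eps < eps0 -> a + delta <= t <= b - delta ->
      Cnorm (Csub (F eps t) (G t)) < eta.

Definition smooth (f : R -> R) : Prop :=
  exists D : nat -> R -> R, D O = f /\
    forall k t, derivable_pt_lim (D k) t (D (S k) t).

Definition C2_with (f f1 f2 : R -> R) : Prop :=
  (forall t, derivable_pt_lim f t (f1 t)) /\
  (forall t, derivable_pt_lim f1 t (f2 t)) /\ continuity f2.

Definition prop_a (d : nat) (a b : R) (N : nat) (g : Z -> Cplx) : Prop :=
  forall (P Q Rm P' Rm' : R -> nat -> nat -> R) (J1 J2 J1' : R -> nat -> R)
         (x x1 x2 : R -> nat -> R),
  (forall i j, (i < d)%nat -> (j < d)%nat ->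
     smooth (fun t => P t i j) /\ smooth (fun t => Q t i j) /\
     smooth (fun t => Rm t i j) /\
     (forall t, derivable_pt_lim (fun s => P s i j) t (P' t i j)) /\
     (forall t, derivable_pt_lim (fun s => Rm s i j) t (Rm' t i j)) /\
     (forall t, P t i j = P t j i) /\ (forall t, Q t i j = Q t j i) /\
     (forall t, Rm t i j = - Rm t j i)) ->
  (forall i, (i < d)%nat ->
     smooth (fun t => J1 t i) /\ smooth (fun t => J2 t i) /\
     (forall t, derivable_pt_lim (fun s => J1 s i) t (J1' t i)) /\
     C2_with (fun t => x t i) (fun t => x1 t i) (fun t => x2 t i)) ->
  forall i, (i < d)%nat ->
    loc_unif_cv a b
      (fun eps t => Theta d a b N g eps P Q Rm J1 J2 x t i)
      (fun t => RtoC (- mvR d (P t) (x2 t) i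
                      + mvR d (fun k l => - P' t k l + 2 * Rm t k l) (x1 t) i
                      + mvR d (fun k l => Rm' t k l + Q t k l) (x t) i
                      - J1' t i + J2 t i)).

Definition prop_b (d : nat) (a b : R) (N : nat) (g : Z -> Cplx) : Prop :=
  forall (x x1 x2 : R -> nat -> R),
  (forall i, (i < d)%nat -> C2_with (fun t => x t i) (fun t => x1 t i) (fun t => x2 t i)) ->
  forall i, (i < d)%nat ->
    loc_unif_cv a b (fun eps t => boxC a b N g eps (fun s => RtoC (x s i)) t)
                    (fun t => RtoC (x1 t i)).

Definition prop_c (d : nat) (a b : R) (N : nat) (g : Z -> Cplx) : Prop :=
  forall (x x1 x2 : R -> nat -> R),
  (forall i, (i < d)%nat -> C2_with (fun t => x t i) (fun t => x1 t i) (fun t => x2 t i)) ->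
  forall i, (i < d)%nat ->
    loc_unif_cv a b (fun eps t => boxmC a b N g eps (fun s => RtoC (x s i)) t)
                    (fun t => RtoC (- x1 t i)).

Definition prop_d (a b : R) (N : nat) (g : Z -> Cplx) : Prop :=
  loc_unif_cv a b (fun eps t => boxC a b N g eps (fun _ => RtoC 1) t) (fun _ => C0) /\
  loc_unif_cv a b (fun eps t => boxC a b N g eps (fun s => RtoC s) t) (fun _ => RtoC 1).

Definition prop_e (N : nat) (g : Z -> Cplx) : Prop :=
  CsumZ N g = C0 /\ CsumZ N (fun l => Cmul (RtoC (IZR l)) (g l)) = RtoC 1.

Definition prop_f (d : nat) (a b : R) (N : nat) (g : Z -> Cplx) : Prop :=
  exists k : Z -> Cplx,
  forall eps, 0 < eps ->
  forall (x : R -> nat -> R) (i : nat) (t : R), (i < d)%nat ->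
    a + 2 * INR N * eps <= t <= b - 2 * INR N * eps ->
    boxC a b N g eps (fun s => RtoC (x s i)) t =
    Cadd (boxrs a b (RtoC 1) (RtoC 0) eps (fun s => RtoC (x s i)) t)
         (CsumZ (N - 1) (fun l => Cmul (k (l + Z.of_nat N)%Z)
            (boxrs a b (RtoC 1) (RtoC (-1)) eps (fun s => RtoC (x s i))
                   (t - IZR l * eps)))).

From Stdlib Require Import Reals ZArith Lra Lia.
Open Scope R_scope.

(** Write [g = ReW g + i ImW g] and let [stencil N rho eps h t] be the real
    operator [(1/eps) sum_l rho_l h (t + l eps)].  Away from the boundary all
    characteristic functions equal 1, so [Box_eps] is a complex combination
    of such stencils, and [Box_{-eps}] is [Box_eps] with mirrored
    coefficients [l |-> g (-l)], whose moments are [(0, -s)] when those of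
    [g] are [(0, s)].

    The analytic core is [stencil_limit]: if [sum rho_l = 0], the stencil of
    a family of differentiable functions whose derivatives converge locally
    uniformly converges to [(sum l rho_l) * limit], by the mean value
    theorem and uniform continuity; conversely, the limits on [1] and [t]
    recover both moments ([moment0_of_limit], [moment1_of_limit]).  From
    these: (b), (c), (d) <-> (e) directly; (e) -> (a) by computing the limit
    of each term of [Theta] ([nested_box_limit] for the term
    [Box_{-eps} (P Box_eps x)]); (a) -> (e) since [Theta] with vanishing
    matrices is [Box_{-eps} J1].  For (f), a discrete Taylor formula writes
    any weight sequence with moments [(0, s)] as [s] times a forward
    difference plus second differences ([sdiff_expansion]); conversely both
    sides of (f) are exact on affine functions. *)

Lemma Rsum_ext n f g : (forall k, (k < n)%nat -> f k = g k) -> Rsum n f = Rsum n g.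
Proof.
  induction n as [|n IH]; intros H; simpl; [reflexivity|].
  rewrite IH by (intros; apply H; lia).
  rewrite H by lia; reflexivity.
Qed.

Lemma Rsum_plus n f g : Rsum n (fun k => f k + g k) = Rsum n f + Rsum n g.
Proof. induction n; simpl; [lra | rewrite IHn; lra]. Qed.

Lemma Rsum_scal n c f : Rsum n (fun k => c * f k) = c * Rsum n f.
Proof. induction n; simpl; [lra | rewrite IHn; lra]. Qed.

Lemma Rsum_minus n f g : Rsum n (fun k => f k - g k) = Rsum n f - Rsum n g.
Proof.
  rewrite (Rsum_ext n _ (fun k => f k + -1 * g k)) by (intros; ring).
  rewrite Rsum_plus, Rsum_scal; ring.
Qed.

Lemma Rsum_zero n f : (forall k, (k < n)%nat -> f k = 0) -> Rsum n f = 0.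
Proof.
  intros H; rewrite (Rsum_ext n f (fun k => 0 * f k)) by (intros; rewrite H by lia; ring).
  rewrite Rsum_scal; ring.
Qed.

Lemma Rsum_le n f g : (forall k, (k < n)%nat -> f k <= g k) -> Rsum n f <= Rsum n g.
Proof.
  induction n as [|n IH]; intros H; simpl; [lra|].
  assert (f n <= g n) by (apply H; lia).
  assert (Rsum n f <= Rsum n g) by (apply IH; intros; apply H; lia). lra.
Qed.

Lemma Rsum_triangle n f : Rabs (Rsum n f) <= Rsum n (fun k => Rabs (f k)).
Proof.
  induction n; simpl; [rewrite Rabs_R0; lra|].
  eapply Rle_trans; [apply Rabs_triang | lra].
Qed.

Lemma Rsum_comm n m (F : nat -> nat -> R) :
  Rsum n (fun k => Rsum m (F k)) = Rsum m (fun j => Rsum n (fun k => F k j)).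
Proof.
  induction n; simpl.
  - symmetry; apply Rsum_zero; reflexivity.
  - rewrite IHn, <- Rsum_plus; reflexivity.
Qed.

Lemma Rsum_rev n f : Rsum n (fun k => f (n - 1 - k)%nat) = Rsum n f.
Proof.
  induction n as [|n IH]; [reflexivity|].
  assert (Hl : forall h, Rsum (S n) h = h 0%nat + Rsum n (fun k => h (S k))).
  { clear; intros h; induction n; simpl in *; [lra | rewrite IHn; lra]. }
  rewrite Hl; simpl Rsum at 2; rewrite <- IH.
  replace (S n - 1 - 0)%nat with n by lia.
  rewrite (Rsum_ext n _ (fun k => f (n - 1 - k)%nat)) by (intros; f_equal; lia).
  lra.
Qed.

Lemma Rsum_trunc n m f : (m <= n)%nat ->
  Rsum n (fun j => if (j <? m)%nat then f j else 0) = Rsum m f.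
Proof.
  induction n as [|n IH]; intros H.
  - replace m with 0%nat by lia; reflexivity.
  - destruct (Nat.eq_dec m (S n)) as [->|Hm].
    + apply Rsum_ext; intros j Hj; destruct (Nat.ltb_spec j (S n)); [reflexivity | lia].
    + simpl; rewrite IH by lia; destruct (Nat.ltb_spec n m); [lia | lra].
Qed.

Definition RsumZ (N : nat) (f : Z -> R) : R :=
  Rsum (2 * N + 1) (fun k => f (Z.of_nat k - Z.of_nat N)%Z).

Lemma RsumZ_ext N f g :
  (forall l, (- Z.of_nat N <= l <= Z.of_nat N)%Z -> f l = g l) -> RsumZ N f = RsumZ N g.
Proof. intros H; apply Rsum_ext; intros k Hk; apply H; lia. Qed.

Lemma RsumZ_plus N f g : RsumZ N (fun l => f l + g l) = RsumZ N f + RsumZ N g.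
Proof. apply Rsum_plus. Qed.

Lemma RsumZ_scal N c f : RsumZ N (fun l => c * f l) = c * RsumZ N f.
Proof. apply Rsum_scal. Qed.

Lemma RsumZ_minus N f g : RsumZ N (fun l => f l - g l) = RsumZ N f - RsumZ N g.
Proof. apply Rsum_minus. Qed.

Lemma RsumZ_mirror N f : RsumZ N (fun l => f (- l)%Z) = RsumZ N f.
Proof.
  unfold RsumZ; rewrite <- Rsum_rev.
  apply Rsum_ext; intros k Hk; f_equal; lia.
Qed.

Lemma Rabs_le_between x m : Rabs x <= m -> - m <= x <= m.
Proof. unfold Rabs; destruct Rcase_abs; intros; lra. Qed.

Lemma stencil_index_bound N l :
  (- Z.of_nat N <= l <= Z.of_nat N)%Z -> Rabs (IZR l) <= INR N.
Proof.
  intros Hl; rewrite INR_IZR_INZ; apply Rabs_le; rewrite <- opp_IZR.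
  split; apply IZR_le; lia.
Qed.

Lemma Cext (z w : Cplx) : Re z = Re w -> Im z = Im w -> z = w.
Proof. destruct z, w; simpl; intros -> ->; reflexivity. Qed.

Lemma Re_Csum n f : Re (Csum n f) = Rsum n (fun k => Re (f k)).
Proof. induction n; simpl; [reflexivity | rewrite IHn; reflexivity]. Qed.

Lemma Im_Csum n f : Im (Csum n f) = Rsum n (fun k => Im (f k)).
Proof. induction n; simpl; [reflexivity | rewrite IHn; reflexivity]. Qed.

Lemma Re_CsumZ N f : Re (CsumZ N f) = RsumZ N (fun l => Re (f l)).
Proof. apply Re_Csum. Qed.

Lemma Im_CsumZ N f : Im (CsumZ N f) = RsumZ N (fun l => Im (f l)).
Proof. apply Im_Csum. Qed.

Lemma CsumZ_ext N f g : (forall l, f l = g l) -> CsumZ N f = CsumZ N g.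
Proof.
  intros H; apply Cext; rewrite ?Re_CsumZ, ?Im_CsumZ;
    apply RsumZ_ext; intros; rewrite H; reflexivity.
Qed.

Lemma CsumZ_mirror N f : CsumZ N (fun l => f (- l)%Z) = CsumZ N f.
Proof.
  apply Cext; rewrite ?Re_CsumZ, ?Im_CsumZ.
  - exact (RsumZ_mirror N (fun l => Re (f l))).
  - exact (RsumZ_mirror N (fun l => Im (f l))).
Qed.

Lemma Cnorm_le_parts (z : Cplx) : Cnorm z <= Rabs (Re z) + Rabs (Im z).
Proof.
  unfold Cnorm.
  pose proof (Rabs_pos (Re z)); pose proof (Rabs_pos (Im z)).
  rewrite <- (sqrt_pow2 (Rabs (Re z) + Rabs (Im z))) by lra.
  apply sqrt_le_1_alt.
  rewrite <- !Rsqr_pow2, (Rsqr_abs (Re z)), (Rsqr_abs (Im z)); unfold Rsqr; nra.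
Qed.

Lemma parts_le_Cnorm (z : Cplx) : Rabs (Re z) <= Cnorm z /\ Rabs (Im z) <= Cnorm z.
Proof.
  unfold Cnorm; split; rewrite <- sqrt_Rsqr_abs; apply sqrt_le_1_alt; unfold Rsqr; nra.
Qed.

Definition small_eps (P : R -> Prop) : Prop :=
  exists e0, 0 < e0 /\ forall eps, 0 < eps < e0 -> P eps.

Lemma small_eps_and P Q : small_eps P -> small_eps Q -> small_eps (fun e => P e /\ Q e).
Proof.
  intros [e1 [He1 H1]] [e2 [He2 H2]]; exists (Rmin e1 e2); split.
  - apply Rmin_glb_lt; assumption.
  - intros eps Heps; pose proof (Rmin_l e1 e2); pose proof (Rmin_r e1 e2).
    split; [apply H1 | apply H2]; lra.
Qed.

Lemma small_eps_mono (P Q : R -> Prop) :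
  (forall e, 0 < e -> P e -> Q e) -> small_eps P -> small_eps Q.
Proof. intros H [e0 [He0 HP]]; exists e0; split; [assumption|]; intros e He; apply H, HP; lra. Qed.

Lemma small_eps_mult m r : 0 <= m -> 0 < r -> small_eps (fun eps => m * eps < r).
Proof.
  intros Hm Hr; exists (r / (m + 1)); split; [apply Rdiv_lt_0_compat; lra|].
  intros eps [He1 He2].
  apply Rmult_lt_compat_r with (r := m + 1) in He2; [|lra].
  unfold Rdiv in He2; rewrite Rmult_assoc, Rinv_l in He2 by lra; nra.
Qed.

Lemma below_all_pos_zero x : (forall eta, 0 < eta -> Rabs x < eta) -> x = 0.
Proof.
  intros H; destruct (Req_dec x 0) as [|Hx]; [assumption|].
  specialize (H (Rabs x) (Rabs_pos_lt x Hx)); lra.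
Qed.

Lemma small_eps_zero x : small_eps (fun eps => Rabs x < eps) -> x = 0.
Proof.
  intros [e0 [He0 H]]; apply below_all_pos_zero; intros eta He.
  pose proof (Rmin_l e0 eta); pose proof (Rmin_r e0 eta).
  assert (0 < Rmin e0 eta) by (apply Rmin_glb_lt; assumption).
  specialize (H (Rmin e0 eta / 2) ltac:(lra)); lra.
Qed.

Definition unif_cv_inside (a b : R) (F : R -> R -> R) (G : R -> R) : Prop :=
  forall delta eta, 0 < delta -> 0 < eta ->
  small_eps (fun eps => forall t, a + delta <= t <= b - delta -> Rabs (F eps t - G t) < eta).

Definition agree_inside {A : Type} (a b : R) (F F' : R -> R -> A) : Prop :=
  forall delta, 0 < delta ->
  small_eps (fun eps => forall t, a + delta <= t <= b - delta -> F eps t = F' eps t).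

Lemma agree_inside_sym {A : Type} a b (F F' : R -> R -> A) :
  agree_inside a b F F' -> agree_inside a b F' F.
Proof.
  intros H delta Hd; apply (small_eps_mono _ _ (fun _ _ E t Ht => eq_sym (E t Ht)) (H delta Hd)).
Qed.

Lemma agree_inside_everywhere {A : Type} a b (F F' : R -> R -> A) :
  (forall eps t, F eps t = F' eps t) -> agree_inside a b F F'.
Proof. intros H delta _; exists 1; split; [lra|]; intros; apply H. Qed.

(** Operators built on a stencil of half-width [m * eps] only see the values
    of their argument near [t]; equalities valid at distance [m * eps] from
    the boundary hence give agreement inside. *)
Lemma agree_inside_stencil {A : Type} a b m (F F' : R -> R -> A) : 0 <= m ->
  (forall delta eps t, 0 < eps -> m * eps <= delta -> a + delta <= t <= b - delta ->
     F eps t = F' eps t) ->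
  agree_inside a b F F'.
Proof.
  intros Hm H delta Hd.
  apply (small_eps_mono _ _ (fun e He Hme t Ht => H delta e t He (Rlt_le _ _ Hme) Ht)).
  apply small_eps_mult; assumption.
Qed.

Lemma unif_cv_inside_ext a b F F' G G' :
  agree_inside a b F F' -> (forall t, G t = G' t) ->
  unif_cv_inside a b F G -> unif_cv_inside a b F' G'.
Proof.
  intros HF HG H delta eta Hd He.
  refine (small_eps_mono _ _ _ (small_eps_and _ _ (HF delta Hd) (H delta eta Hd He))).
  intros eps _ [E B] t Ht; rewrite <- E, <- HG by exact Ht; apply B, Ht.
Qed.

Lemma loc_unif_cv_parts a b F G :
  loc_unif_cv a b F G <->
  unif_cv_inside a b (fun e t => Re (F e t)) (fun t => Re (G t)) /\
  unif_cv_inside a b (fun e t => Im (F e t)) (fun t => Im (G t)).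
Proof.
  split.
  - intros H; split; intros delta eta Hd He; destruct (H delta Hd eta He) as [e0 [He0 B]];
      exists e0; split; [assumption| |assumption|]; intros eps Heps t Ht;
      pose proof (parts_le_Cnorm (Csub (F eps t) (G t))) as [B1 B2];
      specialize (B eps t Heps Ht); simpl in B1, B2; unfold Rminus; lra.
  - intros [H1 H2] delta Hd eta He.
    destruct (small_eps_and _ _ (H1 delta (eta / 2) Hd ltac:(lra))
                                (H2 delta (eta / 2) Hd ltac:(lra)))
      as [e0 [He0 B]].
    exists e0; split; [assumption|]; intros eps t Heps Ht.
    destruct (B eps Heps) as [B1 B2]; specialize (B1 t Ht); specialize (B2 t Ht).
    eapply Rle_lt_trans; [apply Cnorm_le_parts|]; simpl; unfold Rminus in *; lra.
Qed.

Lemma loc_unif_cv_ext a b F F' G G' :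
  agree_inside a b F F' -> (forall t, G t = G' t) ->
  loc_unif_cv a b F G -> loc_unif_cv a b F' G'.
Proof.
  intros HF HG H; apply loc_unif_cv_parts in H as [H1 H2]; apply loc_unif_cv_parts; split.
  - refine (unif_cv_inside_ext _ _ _ _ _ _ _ (fun t => f_equal Re (HG t)) H1).
    intros delta Hd.
    apply (small_eps_mono _ _ (fun _ _ E t Ht => f_equal Re (E t Ht)) (HF delta Hd)).
  - refine (unif_cv_inside_ext _ _ _ _ _ _ _ (fun t => f_equal Im (HG t)) H2).
    intros delta Hd.
    apply (small_eps_mono _ _ (fun _ _ E t Ht => f_equal Im (E t Ht)) (HF delta Hd)).
Qed.

Lemma loc_unif_cv_target a b F G G' :
  (forall t, G t = G' t) -> loc_unif_cv a b F G -> loc_unif_cv a b F G'.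
Proof.
  intros HG; apply loc_unif_cv_ext; [apply agree_inside_everywhere; reflexivity | exact HG].
Qed.

Lemma unif_cv_inside_const a b G : unif_cv_inside a b (fun _ t => G t) G.
Proof.
  intros delta eta _ He; exists 1; split; [lra|]; intros; unfold Rminus.
  rewrite Rplus_opp_r, Rabs_R0; assumption.
Qed.

Lemma unif_cv_inside_plus a b F1 G1 F2 G2 :
  unif_cv_inside a b F1 G1 -> unif_cv_inside a b F2 G2 ->
  unif_cv_inside a b (fun e t => F1 e t + F2 e t) (fun t => G1 t + G2 t).
Proof.
  intros H1 H2 delta eta Hd He.
  refine (small_eps_mono _ _ _ (small_eps_and _ _ (H1 delta (eta / 2) Hd ltac:(lra))
                                                  (H2 delta (eta / 2) Hd ltac:(lra)))).
  intros eps _ [B1 B2] t Ht; specialize (B1 t Ht); specialize (B2 t Ht).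
  replace (F1 eps t + F2 eps t - (G1 t + G2 t))
    with ((F1 eps t - G1 t) + (F2 eps t - G2 t)) by ring.
  eapply Rle_lt_trans; [apply Rabs_triang | lra].
Qed.

Lemma unif_cv_inside_Rsum a b n (F : nat -> R -> R -> R) (G : nat -> R -> R) :
  (forall j, (j < n)%nat -> unif_cv_inside a b (F j) (G j)) ->
  unif_cv_inside a b (fun e t => Rsum n (fun j => F j e t)) (fun t => Rsum n (fun j => G j t)).
Proof.
  induction n as [|n IH]; intros H; simpl.
  - apply unif_cv_inside_const.
  - apply unif_cv_inside_plus; [apply IH; intros; apply H; lia | apply H; lia].
Qed.

(** Multiplication by a continuous function, which is bounded on [a,b]. *)
Lemma unif_cv_inside_mult a b (H : R -> R) F G : continuity H ->
  unif_cv_inside a b F G -> unif_cv_inside a b (fun e t => H t * F e t) (fun t => H t * G t).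
Proof.
  intros HH HF delta eta Hd He.
  assert (Hbound : exists M, 0 <= M /\ forall t, a <= t <= b -> Rabs (H t) <= M).
  { destruct (Rle_dec a b) as [Hab|Hab].
    - destruct (continuity_ab_maj (fun t => Rabs (H t)) a b Hab) as [x [Hx _]].
      + intros c _; apply (continuity_comp H Rabs); [apply HH | apply Rcontinuity_abs].
      + exists (Rabs (H x)); split; [apply Rabs_pos | exact Hx].
    - exists 0; split; [lra|]; intros; lra. }
  destruct Hbound as [M [HM0 HM]].
  refine (small_eps_mono _ _ _ (HF delta (eta / (M + 1)) Hd ltac:(apply Rdiv_lt_0_compat; lra))).
  intros eps _ B t Ht; specialize (B t Ht).
  replace (H t * F eps t - H t * G t) with (H t * (F eps t - G t)) by ring.
  assert (HMt : Rabs (H t) <= M) by (apply HM; lra).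
  assert (B' : (M + 1) * Rabs (F eps t - G t) < eta).
  { replace eta with ((M + 1) * (eta / (M + 1))) by (field; lra).
    apply Rmult_lt_compat_l; lra. }
  rewrite Rabs_mult; pose proof (Rabs_pos (F eps t - G t)); nra.
Qed.

Lemma unif_cv_inside_minus a b F1 G1 F2 G2 :
  unif_cv_inside a b F1 G1 -> unif_cv_inside a b F2 G2 ->
  unif_cv_inside a b (fun e t => F1 e t - F2 e t) (fun t => G1 t - G2 t).
Proof.
  intros H1 H2; apply (unif_cv_inside_mult a b (fun _ => -1)) in H2;
    [| apply continuity_const; intros ? ?; reflexivity].
  refine (unif_cv_inside_ext _ _ _ _ _ _ _ _ (unif_cv_inside_plus _ _ _ _ _ _ H1 H2)).
  - apply agree_inside_everywhere; intros; ring.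
  - intros; ring.
Qed.

Lemma loc_unif_cv_add a b F1 G1 F2 G2 :
  loc_unif_cv a b F1 G1 -> loc_unif_cv a b F2 G2 ->
  loc_unif_cv a b (fun e t => Cadd (F1 e t) (F2 e t)) (fun t => Cadd (G1 t) (G2 t)).
Proof.
  intros [A1 B1]%loc_unif_cv_parts [A2 B2]%loc_unif_cv_parts; apply loc_unif_cv_parts.
  split; apply unif_cv_inside_plus; assumption.
Qed.

Lemma loc_unif_cv_scale a b (H : R -> R) F G : continuity H ->
  loc_unif_cv a b F G ->
  loc_unif_cv a b (fun e t => Cmul (RtoC (H t)) (F e t)) (fun t => Cmul (RtoC (H t)) (G t)).
Proof.
  intros HH [A B]%loc_unif_cv_parts; apply loc_unif_cv_parts; split.
  - apply (unif_cv_inside_ext a b (fun e t => H t * Re (F e t)) _ (fun t => H t * Re (G t))).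
    + apply agree_inside_everywhere; intros; simpl; ring.
    + intros; simpl; ring.
    + apply unif_cv_inside_mult; assumption.
  - apply (unif_cv_inside_ext a b (fun e t => H t * Im (F e t)) _ (fun t => H t * Im (G t))).
    + apply agree_inside_everywhere; intros; simpl; ring.
    + intros; simpl; ring.
    + apply unif_cv_inside_mult; assumption.
Qed.

Lemma loc_unif_cv_opp a b F G :
  loc_unif_cv a b F G -> loc_unif_cv a b (fun e t => Copp (F e t)) (fun t => Copp (G t)).
Proof.
  intros H; apply (loc_unif_cv_scale a b (fun _ => -1)) in H;
    [| apply continuity_const; intros ? ?; reflexivity].
  revert H; apply loc_unif_cv_ext.
  - apply agree_inside_everywhere; intros; apply Cext; simpl; ring.
  - intros; apply Cext; simpl; ring.
Qed.

Lemma loc_unif_cv_const a b G : loc_unif_cv a b (fun _ t => G t) G.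
Proof. apply loc_unif_cv_parts; split; apply unif_cv_inside_const. Qed.

Lemma loc_unif_cv_Csum a b n (F : nat -> R -> R -> Cplx) (G : nat -> R -> Cplx) :
  (forall j, (j < n)%nat -> loc_unif_cv a b (F j) (G j)) ->
  loc_unif_cv a b (fun e t => Csum n (fun j => F j e t)) (fun t => Csum n (fun j => G j t)).
Proof.
  induction n as [|n IH]; intros H; simpl.
  - apply (loc_unif_cv_const a b (fun _ => C0)).
  - apply loc_unif_cv_add; [apply IH; intros; apply H; lia | apply H; lia].
Qed.

Definition stencil (N : nat) (rho : Z -> R) (eps : R) (f : R -> R) (t : R) : R :=
  RsumZ N (fun l => rho l / eps * f (t + IZR l * eps)).

Definition moment0 (N : nat) (rho : Z -> R) : R := RsumZ N rho.
Definition moment1 (N : nat) (rho : Z -> R) : R := RsumZ N (fun l => IZR l * rho l).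

Lemma stencil_zero N rho eps t : stencil N rho eps (fun _ => 0) t = 0.
Proof.
  unfold stencil, RsumZ; apply Rsum_zero; intros; ring.
Qed.

Lemma stencil_const N rho eps t : eps <> 0 ->
  stencil N rho eps (fun _ => 1) t = moment0 N rho / eps.
Proof.
  intros He; unfold stencil, moment0, Rdiv at 2; rewrite Rmult_comm, <- RsumZ_scal.
  apply RsumZ_ext; intros; field; assumption.
Qed.

Lemma stencil_id N rho eps t : eps <> 0 ->
  stencil N rho eps (fun s => s) t = t * moment0 N rho / eps + moment1 N rho.
Proof.
  intros He; unfold stencil, moment0, moment1.
  replace (t * RsumZ N rho / eps) with (t / eps * RsumZ N rho) by (field; assumption).
  rewrite <- RsumZ_scal, <- RsumZ_plus; apply RsumZ_ext; intros; field; assumption.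
Qed.

Lemma moment0_mirror N rho : moment0 N (fun l => rho (- l)%Z) = moment0 N rho.
Proof. apply RsumZ_mirror. Qed.

Lemma moment1_mirror N rho : moment1 N (fun l => rho (- l)%Z) = - moment1 N rho.
Proof.
  unfold moment1; rewrite <- (RsumZ_mirror N (fun l => IZR l * rho l)).
  replace (- _) with (-1 * RsumZ N (fun l => IZR (- l) * rho (- l)%Z)) by ring.
  rewrite <- RsumZ_scal; apply RsumZ_ext; intros; rewrite opp_IZR; ring.
Qed.

Lemma mean_value_step F F' t h : (forall s, derivable_pt_lim F s (F' s)) ->
  exists xi, Rabs (xi - t) <= Rabs h /\ F (t + h) - F t = h * F' xi.
Proof.
  intros D; destruct (Rtotal_order h 0) as [Hh|[->|Hh]].
  - destruct (MVT_cor2 F F' (t + h) t ltac:(lra) (fun c _ => D c)) as [xi [E Hx]].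
    exists xi; split; [rewrite !Rabs_left by lra; lra | nra].
  - exists t; split; [unfold Rminus; rewrite Rplus_opp_r, Rabs_R0; lra | rewrite Rplus_0_r; ring].
  - destruct (MVT_cor2 F F' t (t + h) ltac:(lra) (fun c _ => D c)) as [xi [E Hx]].
    exists xi; split; [rewrite !Rabs_right by lra; lra | rewrite E; ring].
Qed.

Lemma stencil_error N rho eps F g t : eps <> 0 -> moment0 N rho = 0 ->
  stencil N rho eps F t - moment1 N rho * g =
  RsumZ N (fun l => rho l / eps * (F (t + IZR l * eps) - F t) - IZR l * rho l * g).
Proof.
  intros He H0.
  rewrite (RsumZ_ext N _ (fun l => rho l / eps * F (t + IZR l * eps) +
                                   (- (F t / eps) * rho l + - g * (IZR l * rho l))))
    by (intros; field; assumption).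
  rewrite RsumZ_plus, RsumZ_plus, !RsumZ_scal.
  fold (stencil N rho eps F t) (moment0 N rho) (moment1 N rho); rewrite H0; ring.
Qed.

Lemma difference_quotient_bound F F' rho c eps t g e' : 0 < eps ->
  (forall s, derivable_pt_lim F s (F' s)) ->
  (forall xi, Rabs (xi - t) <= Rabs c * eps -> Rabs (F' xi - g) <= e') ->
  Rabs (rho / eps * (F (t + c * eps) - F t) - c * rho * g) <= Rabs (c * rho) * e'.
Proof.
  intros He D Hnear.
  destruct (mean_value_step F F' t (c * eps) D) as [xi [Hxi E]]; rewrite E.
  replace (rho / eps * (c * eps * F' xi) - c * rho * g) with (c * rho * (F' xi - g))
    by (field; lra).
  rewrite Rabs_mult; apply Rmult_le_compat_l; [apply Rabs_pos|].
  apply Hnear; rewrite Rabs_mult, (Rabs_right eps) in Hxi by lra; exact Hxi.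
Qed.

Lemma unif_cv_inside_nearby a b N Ge G : unif_cv_inside a b Ge G -> continuity G ->
  forall delta eta, 0 < delta -> 0 < eta ->
  small_eps (fun eps => forall t xi, a + delta <= t <= b - delta ->
    Rabs (xi - t) <= INR N * eps -> Rabs (Ge eps xi - G t) < eta).
Proof.
  intros HU HG delta eta Hd He.
  destruct (Heine G (fun c => a <= c <= b) (compact_P3 a b) (fun x _ => HG x)
              (mkposreal (eta / 2) ltac:(lra))) as [[r Hr] Hunif]; simpl in Hunif.
  pose proof (pos_INR N) as HN.
  refine (small_eps_mono _ _ _ (small_eps_and _ _ (HU (delta / 2) (eta / 2) ltac:(lra) ltac:(lra))
            (small_eps_and _ _ (small_eps_mult (INR N) r HN Hr)
                               (small_eps_mult (INR N) (delta / 2) HN ltac:(lra))))).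
  intros eps _ [B [Hr' Hd']] t xi Ht Hxi; pose proof (Rabs_le_between _ _ Hxi).
  replace (Ge eps xi - G t) with ((Ge eps xi - G xi) + (G xi - G t)) by ring.
  eapply Rle_lt_trans; [apply Rabs_triang|].
  assert (Rabs (Ge eps xi - G xi) < eta / 2) by (apply B; lra).
  assert (Rabs (G xi - G t) < eta / 2) by (apply Hunif; lra).
  lra.
Qed.

Lemma stencil_limit a b N rho (F Ge : R -> R -> R) G : moment0 N rho = 0 ->
  (forall eps, 0 < eps -> forall s, derivable_pt_lim (F eps) s (Ge eps s)) ->
  unif_cv_inside a b Ge G -> continuity G ->
  unif_cv_inside a b (fun eps t => stencil N rho eps (F eps) t) (fun t => moment1 N rho * G t).
Proof.
  intros H0 HD HU HG delta eta Hd He.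
  set (A := RsumZ N (fun l => Rabs (IZR l * rho l))).
  assert (HA : 0 <= A).
  { unfold A, RsumZ; rewrite <- (Rsum_zero (2 * N + 1) (fun _ => 0)) by reflexivity.
    apply Rsum_le; intros; apply Rabs_pos. }
  set (e' := eta / (A + 1)).
  refine (small_eps_mono _ _ _
            (unif_cv_inside_nearby a b N Ge G HU HG delta e' Hd
               ltac:(apply Rdiv_lt_0_compat; lra))).
  intros eps Heps Hnear t Ht.
  rewrite stencil_error by (lra || assumption).
  eapply Rle_lt_trans; [apply Rsum_triangle|].
  apply Rle_lt_trans with (RsumZ N (fun l => Rabs (IZR l * rho l) * e')).
  - apply Rsum_le; intros k Hk.
    set (l := (Z.of_nat k - Z.of_nat N)%Z).
    assert (Hl : Rabs (IZR l) <= INR N) by (apply stencil_index_bound; unfold l; lia).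
    apply (difference_quotient_bound (F eps) (Ge eps)); [assumption | apply HD; assumption|].
    intros xi Hxi; left; apply Hnear; [assumption|].
    eapply Rle_trans; [exact Hxi | apply Rmult_le_compat_r; lra].
  - unfold RsumZ; rewrite (Rsum_ext _ _ (fun k => e' * Rabs (IZR (Z.of_nat k - Z.of_nat N) *
        rho (Z.of_nat k - Z.of_nat N)%Z))) by (intros; ring).
    rewrite Rsum_scal; fold (RsumZ N (fun l => Rabs (IZR l * rho l))); fold A; unfold e'.
    replace (eta / (A + 1) * A) with (eta * (A / (A + 1))) by (field; lra).
    assert (A / (A + 1) < 1) by (apply Rmult_lt_reg_r with (A + 1); [lra|];
      unfold Rdiv; rewrite Rmult_assoc, Rinv_l by lra; lra).
    nra.
Qed.

Lemma stencil_limit_fixed a b N rho h h' : moment0 N rho = 0 ->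
  (forall s, derivable_pt_lim h s (h' s)) -> continuity h' ->
  unif_cv_inside a b (fun eps t => stencil N rho eps h t) (fun t => moment1 N rho * h' t).
Proof.
  intros H0 Hd Hc; apply (stencil_limit a b N rho (fun _ => h) (fun _ => h')); auto.
  apply unif_cv_inside_const.
Qed.

Lemma unif_cv_inside_midpoint a b F G : a < b -> unif_cv_inside a b F G ->
  forall eta, 0 < eta -> small_eps (fun eps => Rabs (F eps ((a + b) / 2) - G ((a + b) / 2)) < eta).
Proof.
  intros Hab H eta He.
  refine (small_eps_mono _ _ _ (H ((b - a) / 4) eta ltac:(lra) He)).
  intros eps _ B; apply B; lra.
Qed.

(** If [stencil rho 1 -> 0] then [moment0 rho = 0]: else it blows up like [1/eps]. *)
Lemma moment0_of_limit a b N rho : a < b ->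
  unif_cv_inside a b (fun eps t => stencil N rho eps (fun _ => 1) t) (fun _ => 0) ->
  moment0 N rho = 0.
Proof.
  intros Hab H; apply small_eps_zero.
  refine (small_eps_mono _ _ _ (unif_cv_inside_midpoint a b _ _ Hab H 1 Rlt_0_1)).
  intros eps He B; rewrite stencil_const, Rminus_0_r in B by lra.
  unfold Rdiv in B; rewrite Rabs_mult, Rabs_inv, (Rabs_right eps) in B by lra.
  apply Rmult_lt_compat_r with (r := eps) in B; [|lra].
  rewrite Rmult_assoc, Rinv_l in B by lra; lra.
Qed.

Lemma moment1_of_limit a b N rho s : a < b -> moment0 N rho = 0 ->
  unif_cv_inside a b (fun eps t => stencil N rho eps (fun u => u) t) (fun _ => s) ->
  moment1 N rho = s.
Proof.
  intros Hab H0 H; apply Rminus_diag_uniq, below_all_pos_zero; intros eta He.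
  destruct (unif_cv_inside_midpoint a b _ _ Hab H eta He) as [e0 [He0 B]].
  specialize (B (e0 / 2) ltac:(lra)); rewrite stencil_id, H0 in B by lra.
  replace ((a + b) / 2 * 0 / (e0 / 2) + moment1 N rho - s) with (moment1 N rho - s) in B
    by (field; lra).
  exact B.
Qed.

Definition C1_with (f f' : R -> R) : Prop :=
  (forall t, derivable_pt_lim f t (f' t)) /\ continuity f'.

Lemma derivable_continuity f f' : (forall t, derivable_pt_lim f t (f' t)) -> continuity f.
Proof. intros H t; apply derivable_continuous_pt; exists (f' t); apply H. Qed.

Lemma C2_with_C1 f f1 f2 : C2_with f f1 f2 -> C1_with f f1 /\ C1_with f1 f2.
Proof.
  intros [D1 [D2 C]]; split; split; try assumption.
  apply (derivable_continuity _ _ D2).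
Qed.

Lemma derivable_pt_lim_Rsum n (F F' : nat -> R -> R) t :
  (forall j, (j < n)%nat -> derivable_pt_lim (F j) t (F' j t)) ->
  derivable_pt_lim (fun s => Rsum n (fun j => F j s)) t (Rsum n (fun j => F' j t)).
Proof.
  induction n as [|n IH]; intros H; simpl.
  - apply derivable_pt_lim_const.
  - apply (derivable_pt_lim_plus (fun s => Rsum n (fun j => F j s)) (F n));
      [apply IH; intros; apply H; lia | apply H; lia].
Qed.

Lemma continuity_Rsum n (F : nat -> R -> R) : (forall j, (j < n)%nat -> continuity (F j)) ->
  continuity (fun s => Rsum n (fun j => F j s)).
Proof.
  induction n as [|n IH]; intros H; simpl.
  - apply continuity_const; intros ? ?; reflexivity.
  - apply (continuity_plus (fun s => Rsum n (fun j => F j s)) (F n));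
      [apply IH; intros; apply H; lia | apply H; lia].
Qed.

Lemma derivable_pt_lim_scale_shift r c h h' t : (forall s, derivable_pt_lim h s (h' s)) ->
  derivable_pt_lim (fun s => r * h (s + c)) t (r * h' (t + c)).
Proof.
  intros H; replace (r * h' (t + c)) with (0 * h (t + c) + r * (h' (t + c) * (1 + 0))) by ring.
  apply (derivable_pt_lim_mult (fun _ => r) (fun s => h (s + c))); [apply derivable_pt_lim_const|].
  apply (derivable_pt_lim_comp (fun s => s + c) h); [|apply H].
  apply (derivable_pt_lim_plus (fun s => s) (fun _ => c));
    [apply derivable_pt_lim_id | apply derivable_pt_lim_const].
Qed.

Lemma derivable_pt_lim_stencil N rho eps h h' t : (forall s, derivable_pt_lim h s (h' s)) ->
  derivable_pt_lim (fun s => stencil N rho eps h s) t (stencil N rho eps h' t).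
Proof.
  intros H; unfold stencil, RsumZ.
  set (l := fun k => (Z.of_nat k - Z.of_nat N)%Z).
  apply (derivable_pt_lim_Rsum _ (fun k s => rho (l k) / eps * h (s + IZR (l k) * eps))
                                 (fun k s => rho (l k) / eps * h' (s + IZR (l k) * eps))).
  intros; apply derivable_pt_lim_scale_shift, H.
Qed.

Lemma nested_stencil_limit a b d N rho1 rho2 (P P' : R -> nat -> nat -> R)
    (x x1 x2 : R -> nat -> R) i :
  moment0 N rho1 = 0 -> moment0 N rho2 = 0 ->
  (forall j, (j < d)%nat ->
     C1_with (fun t => P t i j) (fun t => P' t i j) /\
     C2_with (fun t => x t j) (fun t => x1 t j) (fun t => x2 t j)) ->
  unif_cv_inside a b
    (fun eps t => stencil N rho1 eps
        (fun s => Rsum d (fun j => P s i j * stencil N rho2 eps (fun u => x u j) s)) t)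
    (fun t => moment1 N rho1 *
        (moment1 N rho2 * Rsum d (fun j => P' t i j * x1 t j + P t i j * x2 t j))).
Proof.
  intros H1 H2 Hreg.
  apply (stencil_limit a b N rho1 _
    (fun eps s => Rsum d (fun j => P' s i j * stencil N rho2 eps (fun u => x u j) s +
                                   P s i j * stencil N rho2 eps (fun u => x1 u j) s))).
  - exact H1.
  - intros eps _ s.
    apply (derivable_pt_lim_Rsum d (fun j s => P s i j * stencil N rho2 eps (fun u => x u j) s)
      (fun j s => P' s i j * stencil N rho2 eps (fun u => x u j) s +
                  P s i j * stencil N rho2 eps (fun u => x1 u j) s)); intros j Hj.
    destruct (Hreg j Hj) as [[DP _] [Dx _]].
    apply (derivable_pt_lim_mult (fun t => P t i j)
                                 (fun t => stencil N rho2 eps (fun u => x u j) t));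
      [apply DP | apply derivable_pt_lim_stencil, Dx].
  - refine (unif_cv_inside_ext _ _ _ _ _ _ (agree_inside_everywhere _ _ _ _ (fun _ _ => eq_refl))
              _ (unif_cv_inside_Rsum a b d _
                   (fun j t => P' t i j * (moment1 N rho2 * x1 t j) +
                               P t i j * (moment1 N rho2 * x2 t j)) _)).
    + intros t; rewrite <- Rsum_scal; apply Rsum_ext; intros; ring.
    + intros j Hj; destruct (Hreg j Hj) as [[_ CP] Hx].
      apply C2_with_C1 in Hx as [[Dx Cx1] [Dx1 Cx2]].
      apply unif_cv_inside_plus; apply unif_cv_inside_mult;
        [ exact CP | apply stencil_limit_fixed; assumption
        | apply (derivable_continuity _ _ (proj1 (proj1 (Hreg j Hj))))
        | apply stencil_limit_fixed; assumption ].
  - apply (continuity_mult (fun _ => moment1 N rho2)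
      (fun t => Rsum d (fun j => P' t i j * x1 t j + P t i j * x2 t j)));
      [apply continuity_const; intros ? ?; reflexivity|].
    apply (continuity_Rsum d (fun j t => P' t i j * x1 t j + P t i j * x2 t j)); intros j Hj.
    destruct (Hreg j Hj) as [[DP CP] Hx]; apply C2_with_C1 in Hx as [[Dx Cx1] [Dx1 Cx2]].
    apply (continuity_plus (fun t => P' t i j * x1 t j) (fun t => P t i j * x2 t j));
      apply continuity_mult; try assumption.
    apply (derivable_continuity _ _ DP).
Qed.

Definition ReW (g : Z -> Cplx) : Z -> R := fun l => Re (g l).
Definition ImW (g : Z -> Cplx) : Z -> R := fun l => Im (g l).
Definition mirror (g : Z -> Cplx) : Z -> Cplx := fun l => g (- l)%Z.

Definition has_moments (N : nat) (g : Z -> Cplx) (s : R) : Prop :=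
  CsumZ N g = C0 /\ CsumZ N (fun l => Cmul (RtoC (IZR l)) (g l)) = RtoC s.

Lemma has_moments_parts N g s :
  has_moments N g s <->
  (moment0 N (ReW g) = 0 /\ moment1 N (ReW g) = s) /\
  (moment0 N (ImW g) = 0 /\ moment1 N (ImW g) = 0).
Proof.
  assert (E1 : Re (CsumZ N (fun l => Cmul (RtoC (IZR l)) (g l))) = moment1 N (ReW g))
    by (rewrite Re_CsumZ; apply RsumZ_ext; intros; simpl; unfold ReW; ring).
  assert (E2 : Im (CsumZ N (fun l => Cmul (RtoC (IZR l)) (g l))) = moment1 N (ImW g))
    by (rewrite Im_CsumZ; apply RsumZ_ext; intros; simpl; unfold ImW; ring).
  assert (E3 : Re (CsumZ N g) = moment0 N (ReW g)) by apply Re_CsumZ.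
  assert (E4 : Im (CsumZ N g) = moment0 N (ImW g)) by apply Im_CsumZ.
  split.
  - intros [H0 H1]; rewrite <- E1, <- E2, <- E3, <- E4, H0, H1; simpl; tauto.
  - intros [[H0 H1] [H2 H3]]; split; apply Cext; simpl; congruence.
Qed.

Lemma has_moments_mirror N g s : has_moments N (mirror g) (- s) <-> has_moments N g s.
Proof.
  rewrite !has_moments_parts.
  change (ReW (mirror g)) with (fun l => ReW g (- l)%Z).
  change (ImW (mirror g)) with (fun l => ImW g (- l)%Z).
  rewrite !moment0_mirror, !moment1_mirror.
  split; intros [[? ?] [? ?]]; repeat split; lra.
Qed.

Lemma boxmC_mirror a b N g eps f t : boxmC a b N g eps f t = boxC a b N (mirror g) eps f t.
Proof.
  unfold boxmC, boxC, mirror; rewrite <- CsumZ_mirror.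
  apply CsumZ_ext; intros l; rewrite opp_IZR.
  replace (t - - IZR l * eps) with (t + IZR l * eps) by ring.
  reflexivity.
Qed.

Lemma chi_inside a b eps l t m : 0 < eps -> Rabs (IZR l) <= m ->
  a + m * eps <= t <= b - m * eps -> chi a b eps l t = 1.
Proof.
  intros He Hl Ht; apply Rabs_le_between in Hl.
  unfold chi; destruct (Rle_dec (Rmax a (a + IZR l * eps)) t) as [h1|h1];
    [destruct (Rle_dec t (Rmin b (b + IZR l * eps))) as [h2|h2]|]; [reflexivity| |]; exfalso.
  - apply h2, Rmin_glb; nra.
  - apply h1, Rmax_lub; nra.
Qed.

Lemma boxC_inside a b N g eps f t delta : 0 < eps -> INR N * eps <= delta ->
  a + delta <= t <= b - delta ->
  boxC a b N g eps f t =
  mkC (stencil N (ReW g) eps (fun s => Re (f s)) t - stencil N (ImW g) eps (fun s => Im (f s)) t)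
      (stencil N (ReW g) eps (fun s => Im (f s)) t + stencil N (ImW g) eps (fun s => Re (f s)) t).
Proof.
  intros He HN Ht; unfold boxC, stencil.
  apply Cext; simpl; rewrite ?Re_CsumZ, ?Im_CsumZ, <- ?RsumZ_minus, <- ?RsumZ_plus;
    apply RsumZ_ext; intros l Hl;
    rewrite (chi_inside a b eps (- l) t (INR N)) by
      (try assumption; try lra; rewrite opp_IZR, Rabs_Ropp; apply stencil_index_bound, Hl);
    unfold ReW, ImW; simpl; field; lra.
Qed.

Lemma stencil_ext_near N rho eps f f' t :
  (forall l, (- Z.of_nat N <= l <= Z.of_nat N)%Z -> f (t + IZR l * eps) = f' (t + IZR l * eps)) ->
  stencil N rho eps f t = stencil N rho eps f' t.
Proof. intros H; apply RsumZ_ext; intros l Hl; rewrite H by exact Hl; reflexivity. Qed.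

Lemma boxC_inside_real a b N g eps h t delta : 0 < eps -> INR N * eps <= delta ->
  a + delta <= t <= b - delta ->
  boxC a b N g eps (fun s => RtoC (h s)) t =
  mkC (stencil N (ReW g) eps h t) (stencil N (ImW g) eps h t).
Proof.
  intros He HN Ht; rewrite (boxC_inside a b N g eps _ t delta) by assumption.
  apply Cext; simpl; rewrite stencil_zero;
    [rewrite Rminus_0_r | rewrite Rplus_0_l]; reflexivity.
Qed.

Lemma box_agree_real a b N g h :
  agree_inside a b (fun eps t => boxC a b N g eps (fun s => RtoC (h s)) t)
    (fun eps t => mkC (stencil N (ReW g) eps h t) (stencil N (ImW g) eps h t)).
Proof.
  apply (agree_inside_stencil a b (INR N)); [apply pos_INR|].
  intros; apply boxC_inside_real with delta; assumption.
Qed.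

Lemma box_limit a b N g s h h' : has_moments N g s -> C1_with h h' ->
  loc_unif_cv a b (fun eps t => boxC a b N g eps (fun u => RtoC (h u)) t)
    (fun t => RtoC (s * h' t)).
Proof.
  intros Hg [Dh Ch]; apply has_moments_parts in Hg as [[R0 R1] [I0 I1]].
  refine (loc_unif_cv_ext _ _ _ _
            (fun t => mkC (moment1 N (ReW g) * h' t) (moment1 N (ImW g) * h' t)) _
            (agree_inside_sym _ _ _ _ (box_agree_real a b N g h)) _ _).
  - intros t; rewrite R1, I1; apply Cext; simpl; ring.
  - apply loc_unif_cv_parts; split; apply stencil_limit_fixed; assumption.
Qed.

Lemma has_moments_of_box_limits a b N g s : a < b ->
  loc_unif_cv a b (fun eps t => boxC a b N g eps (fun _ => RtoC 1) t) (fun _ => RtoC 0) ->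
  loc_unif_cv a b (fun eps t => boxC a b N g eps (fun u => RtoC u) t) (fun _ => RtoC s) ->
  has_moments N g s.
Proof.
  intros Hab H1 H2.
  apply (loc_unif_cv_ext _ _ _ _ _ _ (box_agree_real a b N g (fun _ => 1)) (fun _ => eq_refl)),
        loc_unif_cv_parts in H1 as [A1 B1].
  apply (loc_unif_cv_ext _ _ _ _ _ _ (box_agree_real a b N g (fun u => u)) (fun _ => eq_refl)),
        loc_unif_cv_parts in H2 as [A2 B2].
  apply moment0_of_limit in A1, B1; try assumption.
  apply has_moments_parts; split; split; try assumption;
    eapply moment1_of_limit; eassumption.
Qed.

Lemma Re_mvC d M v i : Re (mvC d M v i) = Rsum d (fun j => M i j * Re (v j)).
Proof. unfold mvC; rewrite Re_Csum; apply Rsum_ext; intros; simpl; ring. Qed.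

Lemma Im_mvC d M v i : Im (mvC d M v i) = Rsum d (fun j => M i j * Im (v j)).
Proof. unfold mvC; rewrite Im_Csum; apply Rsum_ext; intros; simpl; ring. Qed.

Lemma matrix_box_limit a b d N g s (M : R -> nat -> nat -> R) (x x1 : R -> nat -> R) i :
  has_moments N g s ->
  (forall j, (j < d)%nat ->
     continuity (fun t => M t i j) /\ C1_with (fun t => x t j) (fun t => x1 t j)) ->
  loc_unif_cv a b (fun eps t => mvC d (M t) (fun j => boxC a b N g eps (fun u => RtoC (x u j)) t) i)
    (fun t => RtoC (s * mvR d (M t) (x1 t) i)).
Proof.
  intros Hg Hreg.
  refine (loc_unif_cv_target _ _ _ _ _ _ (loc_unif_cv_Csum a b d _
            (fun j t => Cmul (RtoC (M t i j)) (RtoC (s * x1 t j))) _)).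
  - intros t; apply Cext; rewrite ?Re_Csum, ?Im_Csum; unfold mvR; simpl.
    + rewrite <- Rsum_scal; apply Rsum_ext; intros; ring.
    + apply Rsum_zero; intros; ring.
  - intros j Hj; destruct (Hreg j Hj) as [CM Hx].
    apply (loc_unif_cv_scale a b (fun t => M t i j)); [exact CM|].
    apply box_limit; assumption.
Qed.

Lemma nested_box_limit a b d N g1 s1 g2 s2 (P P' : R -> nat -> nat -> R)
    (x x1 x2 : R -> nat -> R) i :
  has_moments N g1 s1 -> has_moments N g2 s2 ->
  (forall j, (j < d)%nat ->
     C1_with (fun t => P t i j) (fun t => P' t i j) /\
     C2_with (fun t => x t j) (fun t => x1 t j) (fun t => x2 t j)) ->
  loc_unif_cv a b
    (fun eps t => boxC a b N g1 eps
       (fun u => mvC d (P u) (fun j => boxC a b N g2 eps (fun v => RtoC (x v j)) u) i) t)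
    (fun t => RtoC (s1 * s2 * Rsum d (fun j => P' t i j * x1 t j + P t i j * x2 t j))).
Proof.
  intros Hg1 Hg2 Hreg.
  set (W := fun rho eps u => Rsum d (fun j => P u i j * stencil N rho eps (fun v => x v j) u)).
  set (Dx := fun t => Rsum d (fun j => P' t i j * x1 t j + P t i j * x2 t j)).
  assert (Hin : agree_inside a b
    (fun eps t => mkC
       (stencil N (ReW g1) eps (W (ReW g2) eps) t - stencil N (ImW g1) eps (W (ImW g2) eps) t)
       (stencil N (ReW g1) eps (W (ImW g2) eps) t + stencil N (ImW g1) eps (W (ReW g2) eps) t))
    (fun eps t => boxC a b N g1 eps
       (fun u => mvC d (P u) (fun j => boxC a b N g2 eps (fun v => RtoC (x v j)) u) i) t)).
  { apply (agree_inside_stencil a b (2 * INR N)); [pose proof (pos_INR N); lra|].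
    intros delta eps t He HN Ht; pose proof (pos_INR N).
    set (delta' := delta - INR N * eps).
    assert (HN' : INR N * eps <= delta') by (unfold delta'; lra).
    assert (Hnear : forall l, (- Z.of_nat N <= l <= Z.of_nat N)%Z ->
      a + delta' <= t + IZR l * eps <= b - delta').
    { intros l Hl; apply stencil_index_bound, Rabs_le_between in Hl; unfold delta'; nra. }
    assert (Hinner : forall u, a + delta' <= u <= b - delta' ->
      Re (mvC d (P u) (fun j => boxC a b N g2 eps (fun v => RtoC (x v j)) u) i)
        = W (ReW g2) eps u /\
      Im (mvC d (P u) (fun j => boxC a b N g2 eps (fun v => RtoC (x v j)) u) i)
        = W (ImW g2) eps u).
    { intros u Hu; rewrite Re_mvC, Im_mvC; split; apply Rsum_ext; intros j _;
        rewrite (boxC_inside_real a b N g2 eps _ u delta') by assumption; reflexivity. }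
    rewrite (boxC_inside a b N g1 eps _ t delta) by (assumption || nra).
    apply Cext; simpl; f_equal; apply stencil_ext_near; intros l Hl;
      symmetry; apply (Hinner _ (Hnear l Hl)). }
  apply has_moments_parts in Hg1 as [[R10 R11] [I10 I11]].
  apply has_moments_parts in Hg2 as [[R20 R21] [I20 I21]].
  refine (loc_unif_cv_ext _ _ _ _ (fun t => mkC
            (moment1 N (ReW g1) * (moment1 N (ReW g2) * Dx t) -
             moment1 N (ImW g1) * (moment1 N (ImW g2) * Dx t))
            (moment1 N (ReW g1) * (moment1 N (ImW g2) * Dx t) +
             moment1 N (ImW g1) * (moment1 N (ReW g2) * Dx t)))
            _ Hin _ _).
  - intros t; rewrite R11, R21, I11, I21; unfold Dx; apply Cext; simpl; ring.
  - apply loc_unif_cv_parts; split;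
      [apply unif_cv_inside_minus | apply unif_cv_inside_plus];
      apply nested_stencil_limit; assumption.
Qed.

Lemma smooth_C1 f f' : smooth f -> (forall t, derivable_pt_lim f t (f' t)) -> C1_with f f'.
Proof.
  intros [D [<- HD]] Hf; split; [exact Hf|]; intros t.
  apply (continuity_pt_locally_ext (D 1%nat) f' 1 t Rlt_0_1).
  - intros y _; apply (uniqueness_limite (D 0%nat) y); [apply HD | apply Hf].
  - apply (derivable_continuity _ _ (HD 1%nat)).
Qed.

Lemma smooth_const c : smooth (fun _ => c).
Proof.
  exists (fun k t => match k with O => c | S _ => 0 end); split; [reflexivity|].
  intros [|k] t; apply derivable_pt_lim_const.
Qed.

Lemma smooth_id : smooth (fun t => t).
Proof.
  exists (fun k t => match k with O => t | 1%nat => 1 | _ => 0 end); split; [reflexivity|].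
  intros [|[|k]] t; [apply derivable_pt_lim_id | apply derivable_pt_lim_const ..].
Qed.

Lemma C1_mvR d (M M' : R -> nat -> nat -> R) (x x1 : R -> nat -> R) i :
  (forall j, (j < d)%nat -> C1_with (fun t => M t i j) (fun t => M' t i j) /\
                            C1_with (fun t => x t j) (fun t => x1 t j)) ->
  C1_with (fun s => mvR d (M s) (x s) i)
          (fun s => Rsum d (fun j => M' s i j * x s j + M s i j * x1 s j)).
Proof.
  intros Hreg; split.
  - intros t; unfold mvR.
    apply (derivable_pt_lim_Rsum d (fun j s => M s i j * x s j)
             (fun j s => M' s i j * x s j + M s i j * x1 s j)); intros j Hj.
    destruct (Hreg j Hj) as [[DM _] [Dx _]].
    apply (derivable_pt_lim_mult (fun s => M s i j) (fun s => x s j)); [apply DM | apply Dx].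
  - apply (continuity_Rsum d (fun j s => M' s i j * x s j + M s i j * x1 s j)); intros j Hj.
    destruct (Hreg j Hj) as [[DM CM] [Dx Cx]].
    apply (continuity_plus (fun s => M' s i j * x s j) (fun s => M s i j * x1 s j));
      apply continuity_mult;
      [ exact CM | exact (derivable_continuity _ _ Dx)
      | exact (derivable_continuity _ _ DM) | exact Cx ].
Qed.

Lemma cel_expansion d (P Q Rm P' Rm' : R -> nat -> nat -> R) (J1' J2 : R -> nat -> R)
    (x x1 x2 : R -> nat -> R) t i :
  -1 * 1 * Rsum d (fun j => P' t i j * x1 t j + P t i j * x2 t j)
  + - (-1 * Rsum d (fun j => Rm' t i j * x t j + Rm t i j * x1 t j))
  + 1 * mvR d (Rm t) (x1 t) i + mvR d (Q t) (x t) i + -1 * J1' t i + J2 t i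
  = - mvR d (P t) (x2 t) i + mvR d (fun k l => - P' t k l + 2 * Rm t k l) (x1 t) i
    + mvR d (fun k l => Rm' t k l + Q t k l) (x t) i - J1' t i + J2 t i.
Proof.
  unfold mvR.
  rewrite (Rsum_ext d (fun j => (- P' t i j + 2 * Rm t i j) * x1 t j)
             (fun j => -1 * (P' t i j * x1 t j) + 2 * (Rm t i j * x1 t j))) by (intros; ring).
  rewrite (Rsum_ext d (fun j => (Rm' t i j + Q t i j) * x t j)
             (fun j => Rm' t i j * x t j + Q t i j * x t j)) by (intros; ring).
  rewrite !Rsum_plus, !Rsum_scal; ring.
Qed.

(** Writing [Box_{-eps}] as [Box_eps] with mirrored
    coefficients (moments [0], [-1]), each of the six terms of [Theta] has
    a limit given by [nested_box_limit], [box_limit] or [matrix_box_limit]. *)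
Lemma theta_limit d a b N g (P Q Rm P' Rm' : R -> nat -> nat -> R) (J1 J2 J1' : R -> nat -> R)
    (x x1 x2 : R -> nat -> R) i :
  prop_e N g ->
  (forall j, (j < d)%nat ->
     C1_with (fun t => P t i j) (fun t => P' t i j) /\
     C1_with (fun t => Rm t i j) (fun t => Rm' t i j) /\
     C2_with (fun t => x t j) (fun t => x1 t j) (fun t => x2 t j)) ->
  C1_with (fun t => J1 t i) (fun t => J1' t i) ->
  loc_unif_cv a b (fun eps t => Theta d a b N g eps P Q Rm J1 J2 x t i)
    (fun t => RtoC (- mvR d (P t) (x2 t) i
                    + mvR d (fun k l => - P' t k l + 2 * Rm t k l) (x1 t) i
                    + mvR d (fun k l => Rm' t k l + Q t k l) (x t) i
                    - J1' t i + J2 t i)).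
Proof.
  intros Hg Hreg HJ.
  assert (Hr : has_moments N (mirror g) (-1)) by (apply has_moments_mirror; exact Hg).
  assert (HPx : forall j, (j < d)%nat ->
    C1_with (fun t => P t i j) (fun t => P' t i j) /\
    C2_with (fun t => x t j) (fun t => x1 t j) (fun t => x2 t j))
    by (intros j Hj; destruct (Hreg j Hj) as [? [? ?]]; split; assumption).
  assert (HRx : forall j, (j < d)%nat ->
    C1_with (fun t => Rm t i j) (fun t => Rm' t i j) /\ C1_with (fun t => x t j) (fun t => x1 t j))
    by (intros j Hj; destruct (Hreg j Hj) as [? [? Hx]]; apply C2_with_C1 in Hx; tauto).
  assert (HRx' : forall j, (j < d)%nat ->
    continuity (fun t => Rm t i j) /\ C1_with (fun t => x t j) (fun t => x1 t j)).
  { intros j Hj; destruct (HRx j Hj) as [[DR _] Hx]; split; [|exact Hx].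
    eapply derivable_continuity; exact DR. }
  pose proof (nested_box_limit a b d N (mirror g) (-1) g 1 P P' x x1 x2 i Hr Hg HPx) as T_PBx.
  pose proof (loc_unif_cv_opp _ _ _ _
    (box_limit a b N (mirror g) (-1) _ _ Hr (C1_mvR d Rm Rm' x x1 i HRx))) as T_Rx.
  pose proof (matrix_box_limit a b d N g 1 Rm x x1 i Hg HRx') as T_RBx.
  pose proof (loc_unif_cv_const a b (fun t => RtoC (mvR d (Q t) (x t) i))) as T_Qx.
  pose proof (box_limit a b N (mirror g) (-1) _ _ Hr HJ) as T_J1.
  pose proof (loc_unif_cv_const a b (fun t => RtoC (J2 t i))) as T_J2.
  refine (loc_unif_cv_ext _ _ _ _ _ _ _ _
    (loc_unif_cv_add _ _ _ _ _ _ (loc_unif_cv_add _ _ _ _ _ _ (loc_unif_cv_add _ _ _ _ _ _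
       (loc_unif_cv_add _ _ _ _ _ _ (loc_unif_cv_add _ _ _ _ _ _ T_PBx T_Rx) T_RBx) T_Qx)
       T_J1) T_J2)).
  - apply agree_inside_everywhere; intros eps t; unfold Theta; rewrite !boxmC_mirror; reflexivity.
  - intros t; apply Cext; simpl; [rewrite <- cel_expansion; ring | ring].
Qed.

Lemma mvC_zero d v i : mvC d (fun _ _ => 0) v i = C0.
Proof. apply Cext; rewrite ?Re_mvC, ?Im_mvC; apply Rsum_zero; intros; ring. Qed.

Lemma mvR_zero d v i : mvR d (fun _ _ => 0) v i = 0.
Proof. apply Rsum_zero; intros; ring. Qed.

Lemma boxmC_vanishing a b N g eps f t : (forall s, f s = C0) -> boxmC a b N g eps f t = C0.
Proof.
  intros H; apply Cext; unfold boxmC; rewrite ?Re_CsumZ, ?Im_CsumZ;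
    apply Rsum_zero; intros; rewrite H; simpl; ring.
Qed.

Lemma theta_zero_data d a b N g eps (J1 : R -> nat -> R) t i :
  Theta d a b N g eps (fun _ _ _ => 0) (fun _ _ _ => 0) (fun _ _ _ => 0) J1
        (fun _ _ => 0) (fun _ _ => 0) t i =
  boxmC a b N g eps (fun s => RtoC (J1 s i)) t.
Proof.
  unfold Theta.
  rewrite (boxmC_vanishing a b N g eps (fun s => mvC d (fun _ _ => 0) _ i))
    by (intros; apply mvC_zero).
  rewrite (boxmC_vanishing a b N g eps (fun s => RtoC (mvR d (fun _ _ => 0) _ i)))
    by (intros; rewrite mvR_zero; reflexivity).
  rewrite mvC_zero, mvR_zero; apply Cext; simpl; ring.
Qed.

Lemma C2_const c : C2_with (fun _ => c) (fun _ => 0) (fun _ => 0).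
Proof.
  split; [|split]; intros; try apply derivable_pt_lim_const.
  apply continuity_const; intros ? ?; reflexivity.
Qed.

Lemma C2_id : C2_with (fun t => t) (fun _ => 1) (fun _ => 0).
Proof.
  split; [|split]; intros; [apply derivable_pt_lim_id | apply derivable_pt_lim_const|].
  apply continuity_const; intros ? ?; reflexivity.
Qed.

(** Property (a), used with vanishing matrices and [J1 = h], says that
    [Box_{-eps} h] converges to [-h']. *)
Lemma prop_a_boxm_limit d a b N g h h' : (1 <= d)%nat -> prop_a d a b N g ->
  smooth h -> (forall t, derivable_pt_lim h t (h' t)) ->
  loc_unif_cv a b (fun eps t => boxmC a b N g eps (fun s => RtoC (h s)) t) (fun t => RtoC (- h' t)).
Proof.
  intros Hd Ha Hs Hh.
  set (zero_mat := fun (_ : R) (_ _ : nat) => 0); set (zero_vec := fun (_ : R) (_ : nat) => 0).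
  refine (loc_unif_cv_ext _ _ _ _ _ _
    (agree_inside_everywhere _ _ _ _
       (fun eps t => theta_zero_data d a b N g eps (fun s _ => h s) t 0))
    _ (Ha zero_mat zero_mat zero_mat zero_mat zero_mat
          (fun s _ => h s) (fun _ _ => 0) (fun s _ => h' s)
          zero_vec zero_vec zero_vec _ _ 0%nat ltac:(lia))).
  - intros t; apply Cext; unfold zero_mat, zero_vec, mvR; simpl;
      rewrite ?Rsum_zero by (intros; ring); ring.
  - intros; unfold zero_mat; repeat split; intros;
      try apply smooth_const; try apply derivable_pt_lim_const; ring.
  - intros; exact (conj Hs (conj (smooth_const 0) (conj Hh (C2_const 0)))).
Qed.

Lemma prop_e_of_boxm_limits a b N g : a < b ->
  loc_unif_cv a b (fun eps t => boxmC a b N g eps (fun _ => RtoC 1) t) (fun _ => RtoC (- 0)) ->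
  loc_unif_cv a b (fun eps t => boxmC a b N g eps (fun u => RtoC u) t) (fun _ => RtoC (- 1)) ->
  prop_e N g.
Proof.
  intros Hab H1 H2; apply (has_moments_mirror N g 1), (has_moments_of_box_limits a b).
  - exact Hab.
  - revert H1; apply loc_unif_cv_ext;
      [ apply agree_inside_everywhere; intros; apply boxmC_mirror
      | intros; unfold RtoC; f_equal; ring ].
  - revert H2; apply loc_unif_cv_ext;
      [apply agree_inside_everywhere; intros; apply boxmC_mirror | reflexivity].
Qed.

(** (a) <-> (e): with vanishing data (a) gives the limits of [Box_{-eps}] on
    [1] and [t]; conversely [theta_limit]. *)
Lemma a_iff_e d a b N g : a < b -> (1 <= d)%nat -> prop_a d a b N g <-> prop_e N g.
Proof.
  intros Hab Hd; split.
  - intros Ha; apply (prop_e_of_boxm_limits a b N g Hab).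
    + apply (prop_a_boxm_limit d a b N g (fun _ => 1) (fun _ => 0)); try assumption.
      * apply smooth_const.
      * intros; apply derivable_pt_lim_const.
    + apply (prop_a_boxm_limit d a b N g (fun u => u) (fun _ => 1)); try assumption.
      * apply smooth_id.
      * intros; apply derivable_pt_lim_id.
  - intros He P Q Rm P' Rm' J1 J2 J1' x x1 x2 HM HJ i Hi.
    apply theta_limit; [exact He | |].
    + intros j Hj; destruct (HM i j Hi Hj) as [SP [_ [SR [DP [DR _]]]]].
      destruct (HJ j Hj) as [_ [_ [_ Hx]]].
      split; [|split]; [apply smooth_C1 .. | exact Hx]; assumption.
    + destruct (HJ i Hi) as [SJ [_ [DJ _]]]; apply smooth_C1; assumption.
Qed.

Lemma b_iff_e d a b N g : a < b -> (1 <= d)%nat -> prop_b d a b N g <-> prop_e N g.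
Proof.
  intros Hab Hd; split.
  - intros Hb; apply (has_moments_of_box_limits a b N g 1 Hab).
    + exact (Hb (fun _ _ => 1) (fun _ _ => 0) (fun _ _ => 0) (fun _ _ => C2_const 1)
               0%nat ltac:(lia)).
    + exact (Hb (fun s _ => s) (fun _ _ => 1) (fun _ _ => 0) (fun _ _ => C2_id) 0%nat ltac:(lia)).
  - intros He x x1 x2 Hx i Hi; destruct (C2_with_C1 _ _ _ (Hx i Hi)) as [Hx1 _].
    refine (loc_unif_cv_target _ _ _ _ _ _ (box_limit a b N g 1 _ _ He Hx1)).
    intros; unfold RtoC; f_equal; ring.
Qed.

(** (c) <-> (e), through the mirrored coefficients. *)
Lemma c_iff_e d a b N g : a < b -> (1 <= d)%nat -> prop_c d a b N g <-> prop_e N g.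
Proof.
  intros Hab Hd; split.
  - intros Hc; apply (prop_e_of_boxm_limits a b N g Hab).
    + exact (Hc (fun _ _ => 1) (fun _ _ => 0) (fun _ _ => 0) (fun _ _ => C2_const 1)
               0%nat ltac:(lia)).
    + exact (Hc (fun s _ => s) (fun _ _ => 1) (fun _ _ => 0) (fun _ _ => C2_id) 0%nat ltac:(lia)).
  - intros He x x1 x2 Hx i Hi; destruct (C2_with_C1 _ _ _ (Hx i Hi)) as [Hx1 _].
    apply has_moments_mirror in He.
    refine (loc_unif_cv_ext _ _ _ _ _ _ _ _ (box_limit a b N (mirror g) (-1) _ _ He Hx1)).
    + apply agree_inside_everywhere; intros; symmetry; apply boxmC_mirror.
    + intros; unfold RtoC; f_equal; ring.
Qed.

Lemma d_iff_e a b N g : a < b -> prop_d a b N g <-> prop_e N g.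
Proof.
  intros Hab; split.
  - intros [H1 H2]; exact (has_moments_of_box_limits a b N g 1 Hab H1 H2).
  - intros He; split.
    + refine (loc_unif_cv_target _ _ _ _ _ _ (box_limit a b N g 1 (fun _ => 1) (fun _ => 0) He _));
        [intros; unfold RtoC, C0; f_equal; ring | exact (proj1 (C2_with_C1 _ _ _ (C2_const 1)))].
    + refine (loc_unif_cv_target _ _ _ _ _ _ (box_limit a b N g 1 (fun u => u) (fun _ => 1) He _));
        [intros; unfold RtoC; f_equal; ring | exact (proj1 (C2_with_C1 _ _ _ C2_id))].
Qed.

Definition sdiff (y : nat -> R) (j : nat) : R := y j - 2 * y (S j) + y (S (S j)).

(** The ramp [(k - j)_+], the discrete analogue of the Taylor kernel. *)
Definition ramp (k j : nat) : R := if (j <? k)%nat then INR (k - j) else 0.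

Lemma sdiff_telescope y n : Rsum n (sdiff y) = (y (S n) - y n) - (y 1%nat - y 0%nat).
Proof. induction n as [|n IH]; simpl; [ring | rewrite IH; unfold sdiff; ring]. Qed.

Lemma ramp_succ k j : ramp (S k) (S j) = ramp k (S j) + (if (j <? k)%nat then 1 else 0).
Proof.
  unfold ramp; destruct (Nat.ltb_spec (S j) (S k)), (Nat.ltb_spec (S j) k), (Nat.ltb_spec j k);
    try lia; try ring.
  - replace (S k - S j)%nat with (S (k - S j)) by lia; rewrite S_INR; ring.
  - replace (S k - S j)%nat with 1%nat by lia; simpl; ring.
Qed.

Lemma discrete_taylor y M k : (k <= M)%nat ->
  y k = y 0%nat + INR k * (y 1%nat - y 0%nat) + Rsum (M - 1) (fun j => ramp k (S j) * sdiff y j).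
Proof.
  induction k as [|k IH]; intros Hk.
  - rewrite Rsum_zero; [simpl; ring|].
    intros j _; unfold ramp; destruct (Nat.ltb_spec (S j) 0); [lia | ring].
  - rewrite (Rsum_ext _ _
      (fun j => ramp k (S j) * sdiff y j + (if (j <? k)%nat then sdiff y j else 0)))
      by (intros j _; rewrite ramp_succ; destruct (j <? k)%nat; ring).
    rewrite Rsum_plus, Rsum_trunc, sdiff_telescope, S_INR by lia.
    rewrite IH at 1 by lia; ring.
Qed.

(** Coefficients of a weight sequence in the basis of second differences. *)
Definition sdiff_coeff (M m : nat) (w : nat -> R) (sigma : R) (j : nat) : R :=
  Rsum (M + 1) (fun k => w k * ramp k (S j)) - sigma * (if (j <? m)%nat then 1 else 0).

Lemma sdiff_expansion M m (w y : nat -> R) sigma : (m < M)%nat ->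
  Rsum (M + 1) w = 0 -> Rsum (M + 1) (fun k => w k * INR k) = sigma ->
  Rsum (M + 1) (fun k => w k * y k) =
  sigma * (y (S m) - y m) + Rsum (M - 1) (fun j => sdiff_coeff M m w sigma j * sdiff y j).
Proof.
  intros Hm H0 H1.
  rewrite (Rsum_ext _ (fun k => w k * y k)
     (fun k => y 0%nat * w k + (y 1%nat - y 0%nat) * (w k * INR k)
               + Rsum (M - 1) (fun j => w k * ramp k (S j) * sdiff y j))).
  2:{ intros k Hk; rewrite (discrete_taylor y M k) at 1 by lia.
      rewrite !Rmult_plus_distr_l, <- (Rsum_scal _ (w k)).
      f_equal; [ring | apply Rsum_ext; intros; ring]. }
  rewrite !Rsum_plus, !Rsum_scal, H0, H1, Rsum_comm.
  rewrite (Rsum_ext (M - 1) (fun j => sdiff_coeff M m w sigma j * sdiff y j)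
             (fun j => Rsum (M + 1) (fun k => w k * ramp k (S j)) * sdiff y j
                                       + - sigma * (if (j <? m)%nat then sdiff y j else 0)))
    by (intros j _; unfold sdiff_coeff; destruct (j <? m)%nat; ring).
  rewrite Rsum_plus, Rsum_scal, Rsum_trunc, sdiff_telescope by lia.
  rewrite (Rsum_ext (M - 1) (fun j => Rsum (M + 1) (fun k => w k * ramp k (S j) * sdiff y j))
     (fun j => Rsum (M + 1) (fun k => w k * ramp k (S j)) * sdiff y j)).
  - ring.
  - intros j _; rewrite Rmult_comm, <- Rsum_scal; apply Rsum_ext; intros; ring.
Qed.

Definition samples (N : nat) (h : R -> R) (eps t : R) (k : nat) : R :=
  h (t + IZR (Z.of_nat k - Z.of_nat N) * eps).

Lemma IZR_nat_diff j n : IZR (Z.of_nat j - Z.of_nat n) = INR j - INR n.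
Proof. rewrite minus_IZR, <- !INR_IZR_INZ; reflexivity. Qed.

Lemma stencil_sdiff_form N rho eps h t : (1 <= N)%nat -> eps <> 0 -> moment0 N rho = 0 ->
  stencil N rho eps h t =
  (moment1 N rho * (samples N h eps t (S N) - samples N h eps t N) +
   Rsum (2 * N - 1) (fun j =>
     sdiff_coeff (2 * N) N (fun k => rho (Z.of_nat k - Z.of_nat N)%Z) (moment1 N rho) j *
     sdiff (samples N h eps t) j)) / eps.
Proof.
  intros HN He H0.
  assert (H1 : Rsum (2 * N + 1) (fun k => rho (Z.of_nat k - Z.of_nat N)%Z * INR k) = moment1 N rho).
  { rewrite <- Rplus_0_r, <- (Rmult_0_r (INR N)), <- H0.
    unfold moment0, moment1, RsumZ; rewrite <- Rsum_scal, <- Rsum_plus.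
    apply Rsum_ext; intros; rewrite IZR_nat_diff; ring. }
  rewrite <- (sdiff_expansion (2 * N) N _ (samples N h eps t) (moment1 N rho))
    by (lia || assumption).
  unfold stencil, RsumZ, samples, Rdiv; rewrite Rmult_comm, <- Rsum_scal.
  apply Rsum_ext; intros; ring.
Qed.

Lemma boxrs_inside a b r s eps h u : 0 < eps -> a + eps <= u <= b - eps ->
  boxrs a b (RtoC r) (RtoC s) eps (fun v => RtoC (h v)) u =
  RtoC ((- s * h (u - eps) + (s - r) * h u + r * h (u + eps)) / eps).
Proof.
  intros He Hu.
  assert (H1 : Rabs (IZR 1) <= 1) by (unfold Rabs; destruct Rcase_abs; lra).
  assert (Hm1 : Rabs (IZR (-1)) <= 1) by (unfold Rabs; destruct Rcase_abs; lra).
  unfold boxrs, Csub; rewrite (chi_inside a b eps 1 u 1), (chi_inside a b eps (-1) u 1) by lra.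
  apply Cext; simpl; field; lra.
Qed.

Definition fd_rhs (a b : R) (N : nat) (eps : R) (k : Z -> Cplx) (h : R -> R) (t : R) : Cplx :=
  Cadd (boxrs a b (RtoC 1) (RtoC 0) eps (fun s => RtoC (h s)) t)
       (CsumZ (N - 1) (fun l => Cmul (k (l + Z.of_nat N)%Z)
          (boxrs a b (RtoC 1) (RtoC (-1)) eps (fun s => RtoC (h s)) (t - IZR l * eps)))).

(** In the safety interval, the shifted operators [Box^{[1,-1]}] are the
    second differences of the samples; reindexed so that the shift [l]
    becomes the index [j = N - 1 - l] of the second difference. *)
Lemma second_difference_sum a b N eps h t (c : Z -> R) : (1 <= N)%nat -> 0 < eps ->
  a + 2 * INR N * eps <= t <= b - 2 * INR N * eps ->
  RsumZ (N - 1) (fun l => c (l + Z.of_nat N)%Z *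
    Re (boxrs a b (RtoC 1) (RtoC (-1)) eps (fun s => RtoC (h s)) (t - IZR l * eps))) =
  Rsum (2 * N - 1) (fun j =>
    c (Z.of_nat (2 * N - 1) - Z.of_nat j)%Z * sdiff (samples N h eps t) j) / eps.
Proof.
  intros HN He Ht; rewrite <- RsumZ_mirror; unfold RsumZ, Rdiv.
  replace (2 * (N - 1) + 1)%nat with (2 * N - 1)%nat by lia.
  rewrite Rmult_comm, <- Rsum_scal; apply Rsum_ext; intros j Hj.
  replace (- (Z.of_nat j - Z.of_nat (N - 1)) + Z.of_nat N)%Z
    with (Z.of_nat (2 * N - 1) - Z.of_nat j)%Z by lia.
  assert (Hj' : INR j + 2 <= 2 * INR N).
  { replace 2 with (INR 2) by reflexivity; rewrite <- plus_INR, <- mult_INR; apply le_INR; lia. }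
  assert (HN1 : 1 <= INR N) by (apply (le_INR 1); lia).
  replace (t - IZR (- (Z.of_nat j - Z.of_nat (N - 1))) * eps)
    with (t + (INR j - INR N + 1) * eps)
    by (rewrite opp_IZR, IZR_nat_diff, minus_INR by lia; simpl; ring).
  pose proof (pos_INR j).
  rewrite boxrs_inside by (assumption || split; nra).
  unfold sdiff, samples; rewrite !IZR_nat_diff, !S_INR; simpl.
  replace (t + (INR j - INR N + 1) * eps - eps) with (t + (INR j - INR N) * eps) by ring.
  replace (t + (INR j - INR N + 1) * eps + eps) with (t + (INR j + 1 + 1 - INR N) * eps) by ring.
  replace (t + (INR j - INR N + 1) * eps) with (t + (INR j + 1 - INR N) * eps) by ring.
  field; lra.
Qed.

Lemma fd_rhs_inside a b N eps k h t : (1 <= N)%nat -> 0 < eps ->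
  a + 2 * INR N * eps <= t <= b - 2 * INR N * eps ->
  fd_rhs a b N eps k h t =
  mkC ((samples N h eps t (S N) - samples N h eps t N) / eps +
       Rsum (2 * N - 1) (fun j => Re (k (Z.of_nat (2 * N - 1) - Z.of_nat j)%Z) *
                                  sdiff (samples N h eps t) j) / eps)
      (Rsum (2 * N - 1) (fun j => Im (k (Z.of_nat (2 * N - 1) - Z.of_nat j)%Z) *
                                  sdiff (samples N h eps t) j) / eps).
Proof.
  intros HN He Ht; assert (HN1 : 1 <= INR N) by (apply (le_INR 1); lia).
  unfold fd_rhs; rewrite boxrs_inside by (assumption || split; nra).
  rewrite <- (second_difference_sum a b N eps h t (fun z => Re (k z))),
          <- (second_difference_sum a b N eps h t (fun z => Im (k z))) by assumption.
  apply Cext; simpl; rewrite ?Re_CsumZ, ?Im_CsumZ.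
  - f_equal.
    + unfold samples; rewrite !IZR_nat_diff, S_INR.
      replace (t + (INR N + 1 - INR N) * eps) with (t + eps) by ring.
      replace (t + (INR N - INR N) * eps) with t by ring.
      field; lra.
    + apply RsumZ_ext; intros; simpl; ring.
  - rewrite Rplus_0_l; apply RsumZ_ext; intros; simpl; ring.
Qed.

Lemma fd_rhs_affine a b N eps k h t c0 c1 : (1 <= N)%nat -> 0 < eps ->
  a + 2 * INR N * eps <= t <= b - 2 * INR N * eps -> (forall s, h s = c0 + c1 * s) ->
  fd_rhs a b N eps k h t = RtoC c1.
Proof.
  intros HN He Ht Hh; rewrite fd_rhs_inside by assumption.
  assert (Hsd : forall j, sdiff (samples N h eps t) j = 0).
  { intros j; unfold sdiff, samples; rewrite !Hh, !IZR_nat_diff, !S_INR; ring. }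
  rewrite !Rsum_zero by (intros; rewrite Hsd; ring).
  unfold samples; rewrite !Hh, !IZR_nat_diff, S_INR.
  apply Cext; simpl; field; lra.
Qed.

(** (e) implies (f): the coefficients [k] are read off the expansion of the
    real and imaginary weights in second differences. *)
Lemma f_of_e d a b N g : (1 <= N)%nat -> prop_e N g -> prop_f d a b N g.
Proof.
  intros HN He; apply has_moments_parts in He as [[R0 R1] [I0 I1]].
  set (coeff := fun rho sigma z =>
    sdiff_coeff (2 * N) N (fun k => rho (Z.of_nat k - Z.of_nat N)%Z) sigma
                (Z.to_nat (Z.of_nat (2 * N - 1) - z))).
  exists (fun z => mkC (coeff (ReW g) 1 z) (coeff (ImW g) 0 z)).
  intros eps Heps x i t _ Ht.
  pose proof (pos_INR N).
  change (boxC a b N g eps (fun s => RtoC (x s i)) t =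
          fd_rhs a b N eps (fun z => mkC (coeff (ReW g) 1 z) (coeff (ImW g) 0 z))
                 (fun s => x s i) t).
  rewrite fd_rhs_inside, (boxC_inside_real a b N g eps _ t (2 * INR N * eps))
    by (assumption || nra).
  rewrite !stencil_sdiff_form, R1, I1 by (assumption || lra).
  assert (Hidx : forall (K y : nat -> R),
    Rsum (2 * N - 1)
      (fun j => K (Z.to_nat (Z.of_nat (2 * N - 1) - (Z.of_nat (2 * N - 1) - Z.of_nat j))) * y j)
    = Rsum (2 * N - 1) (fun j => K j * y j)).
  { intros K y; apply Rsum_ext; intros j _.
    do 2 f_equal; rewrite <- (Nat2Z.id j) at 2; f_equal; lia. }
  apply Cext; cbn [Re Im]; unfold coeff.
  - rewrite (Hidx (sdiff_coeff (2 * N) N (fun k => ReW g (Z.of_nat k - Z.of_nat N)%Z) 1)).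
    field; lra.
  - rewrite (Hidx (sdiff_coeff (2 * N) N (fun k => ImW g (Z.of_nat k - Z.of_nat N)%Z) 0)).
    field; lra.
Qed.

(** (f) implies (e): on affine functions both sides of (f) are computed
    exactly, which forces the two moments. *)
Lemma e_of_f d a b N g : a < b -> (1 <= d)%nat -> (1 <= N)%nat -> prop_f d a b N g -> prop_e N g.
Proof.
  intros Hab Hd HN [k Hk].
  set (eps := (b - a) / (4 * INR N + 4)); set (t := (a + b) / 2).
  pose proof (pos_INR N).
  assert (He : 0 < eps) by (unfold eps; apply Rdiv_lt_0_compat; lra).
  assert (Ht : a + 2 * INR N * eps <= t <= b - 2 * INR N * eps).
  { assert (4 * INR N * eps + 4 * eps = b - a) by (unfold eps; field; lra); unfold t; nra. }
  assert (Hbox : forall h c0 c1, (forall s, h s = c0 + c1 * s) ->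
    mkC (stencil N (ReW g) eps h t) (stencil N (ImW g) eps h t) = RtoC c1).
  { intros h c0 c1 Hh.
    rewrite <- (boxC_inside_real a b N g eps h t (2 * INR N * eps)) by (assumption || nra).
    rewrite <- (fd_rhs_affine a b N eps k h t c0 c1) by assumption.
    exact (Hk eps He (fun s _ => h s) 0%nat t ltac:(lia) Ht). }
  pose proof (Hbox (fun _ => 1) 1 0 ltac:(intros; cbv beta; ring)) as H1.
  pose proof (Hbox (fun s => s) 0 1 ltac:(intros; cbv beta; ring)) as H2.
  apply (f_equal Re) in H1 as A1; apply (f_equal Im) in H1 as B1.
  apply (f_equal Re) in H2 as A2; apply (f_equal Im) in H2 as B2; simpl in A1, B1, A2, B2.
  rewrite stencil_const in A1, B1 by lra; rewrite stencil_id in A2, B2 by lra.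
  assert (Hdiv : forall u, u / eps = 0 -> u = 0)
    by (intros u Hu; replace u with (u / eps * eps) by (field; lra); rewrite Hu; ring).
  apply Hdiv in A1, B1; rewrite A1 in A2; rewrite B1 in B2.
  replace (t * 0 / eps) with 0 in A2, B2 by (field; lra).
  apply has_moments_parts; repeat split; lra.
Qed.

Theorem mainTheorem5 (a b : R) (d N : nat) (g : Z -> Cplx) :
  a < b -> (1 <= d)%nat -> (1 <= N)%nat ->
  (prop_a d a b N g <-> prop_e N g) /\
  (prop_b d a b N g <-> prop_e N g) /\
  (prop_c d a b N g <-> prop_e N g) /\
  (prop_d a b N g <-> prop_e N g) /\
  (prop_f d a b N g <-> prop_e N g).
Proof.
  intros Hab Hd HN.
  split; [exact (a_iff_e d a b N g Hab Hd)|].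
  split; [exact (b_iff_e d a b N g Hab Hd)|].
  split; [exact (c_iff_e d a b N g Hab Hd)|].
  split; [exact (d_iff_e a b N g Hab)|].
  split; [exact (e_of_f d a b N g Hab Hd HN) | exact (f_of_e d a b N g HN)].
Qed.
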